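(* In the SVAR(1) model with regime chain $\{I_n\}$ on $\{1,\dots,r\}$, for $i\in\{1,\dots,r\}$ and $n\ge1$ let $\Phi_n(i)=\mathbb{E}\big[\|A_n\cdots A_1\|\,\big|\,I_0=i\big]$, where $\|\cdot\|$ is a submultiplicative matrix norm. Then $\Phi_n(i)\to0$ as $n\to\infty$ for every $i$ if and only if there exist constants $C<\infty$ and $\gamma\in(0,1)$ such that $\Phi_n(i)\le C\gamma^n$ for all $n\ge1$ and all $i$.
   Context: SVAR(1) model: let $\{I_n\}$ be a Markov chain on the finite set $\mathcal{S}=\{1,\dots,r\}$. Given fixed real $p\times p$ matrices $B_1,\dots,B_r$ and fixed $p\times p$ matrices $\Sigma_1,\dots,\Sigma_r$, set $A_n=\sum_{i=1}^rB_i\mathbf{1}_{\{I_n=i\}}$ and $E_n=\sum_{i=1}^r\Sigma_i\varepsilon_{ni}\mathbf{1}_{\{I_n=i\}}$, where for each $i$ the sequence $(\varepsilon_{ni})_n$ is i.i.d. with mean zero and identity covariance matrix, the sequences $(\varepsilon_{n1})_n,\dots,(\varepsilon_{nr})_n$ are mutually independent, and $\{I_n\}$ is independent of all the $\varepsilon_{ni}$. The model is $X_n=A_nX_{n-1}+E_n$. *)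

From HB Require Import structures.
From mathcomp Require Import all_boot all_order all_algebra.
From mathcomp Require Import all_classical all_reals all_analysis.
Set Implicit Arguments. Unset Strict Implicit. Unset Printing Implicit Defensive.
Import Order.TTheory GRing.Theory Num.Theory.
Local Open Scope ring_scope.

Definition stochastic (R : realType) (r : nat) (P : 'M[R]_r) : Prop :=
  (forall i j, 0 <= P i j) /\ (forall i, \sum_(j < r) P i j = 1).

Definition submult_mxnorm (R : realType) (p : nat) (N : 'M[R]_p -> R) : Prop :=
  [/\ forall A, 0 <= N A,
      forall A, N A = 0 -> A = 0,
      forall (a : R) A, N (a *: A) = `|a| * N A,
      forall A B, N (A + B) <= N A + N B
    & forall A B, N (A *m B) <= N A * N B].

(* Probability that the chain started at i follows the path s = [i_1; ...; i_n]:
   P(i,i_1) P(i_1,i_2) ... P(i_{n-1},i_n). *)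
Fixpoint path_prob (R : realType) (r : nat) (P : 'M[R]_r) (i : 'I_r)
    (s : seq 'I_r) : R :=
  if s is j :: s' then P i j * path_prob P j s' else 1.

(* For s = [i_1; ...; i_n], path_mx B s = B_{i_n} *m ... *m B_{i_1}
   (= A_n ... A_1 on the event I_1 = i_1, ..., I_n = i_n). *)
Fixpoint path_mx (R : realType) (r p : nat) (B : 'I_r -> 'M[R]_p)
    (s : seq 'I_r) : 'M[R]_p :=
  if s is j :: s' then path_mx B s' *m B j else 1%:M.

(* Phi_n(i) = E[ ||A_n ... A_1|| | I_0 = i ], for the Markov chain with
   transition matrix P: the expectation of a function of (I_1,...,I_n)
   given I_0 = i, written as the sum over all paths. *)
Definition Phi (R : realType) (r p : nat) (P : 'M[R]_r) (B : 'I_r -> 'M[R]_p)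
    (N : 'M[R]_p -> R) (n : nat) (i : 'I_r) : R :=
  \sum_(s : n.-tuple 'I_r) path_prob P i s * N (path_mx B s).

(* Write Phi_n(i) through the more general quantity
   E[ ||A_n ... A_1 X|| | I_0 = i ], which satisfies a one-step recursion in
   n.  Conditioning on the first m steps and using submultiplicativity of the
   norm shows that S_n := sum_i Phi_n(i) is submultiplicative,
   S_(m+n) <= S_m S_n.  If every Phi_n(i) tends to 0 then so does S_n, so
   S_K <= 1/2 for some K, and iterating gives S_(qK+s) <= 2^-q S_s, i.e.
   geometric decay. *)
From HB Require Import structures.
From mathcomp Require Import all_boot all_order all_algebra.
From mathcomp Require Import all_classical all_reals all_analysis.
From mathcomp Require Import lra.
Import Order.TTheory GRing.Theory Num.Theory numFieldNormedType.Exports.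
Local Open Scope classical_set_scope.
Local Open Scope ring_scope.

Section PathExpectation.
Context {R : realType} {r p : nat} (P : 'M[R]_r) (B : 'I_r -> 'M[R]_p).
Context (N : 'M[R]_p -> R).

Definition Phi_mulmx n i X :=
  \sum_(s : n.-tuple 'I_r) path_prob P i s * N (path_mx B s *m X).

Lemma Phi_mulmx0 i X : Phi_mulmx 0 i X = N X.
Proof.
rewrite /Phi_mulmx (big_pred1 [tuple]) /= ?mul1r ?mul1mx // => t.
by apply/esym/eqP/val_inj; case: t => [[]].
Qed.

Lemma Phi_mulmxS n i X :
  Phi_mulmx n.+1 i X = \sum_j P i j * Phi_mulmx n j (B j *m X).
Proof.
pose cons_tuple (q : 'I_r * n.-tuple 'I_r) := [tuple of q.1 :: q.2].
rewrite /Phi_mulmx (reindex cons_tuple) /=; last first.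
  exists (fun t : n.+1.-tuple 'I_r => (thead t, [tuple of behead t])).
    by move=> [j s] _; congr pair; apply: val_inj.
  by move=> t _; rewrite [RHS]tuple_eta; apply: val_inj.
rewrite -(pair_big xpredT xpredT (fun j (s : n.-tuple 'I_r) =>
  path_prob P i (j :: s) * N (path_mx B (j :: s) *m X))) /=.
apply: eq_bigr => j _; rewrite mulr_sumr; apply: eq_bigr => s _.
by rewrite mulrA mulmxA.
Qed.

Lemma Phi_mulmx1 n i : Phi P B N n i = Phi_mulmx n i 1%:M.
Proof. by apply: eq_bigr => s _; rewrite mulmx1. Qed.

Definition Phi_sum n := \sum_j Phi P B N n j.

Hypothesis P_ge0 : forall i j, 0 <= P i j.
Hypothesis N_ge0 : forall A, 0 <= N A.
Hypothesis N_mul : forall A C, N (A *m C) <= N A * N C.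

Lemma path_prob_ge0 i s : 0 <= path_prob P i s.
Proof. by elim: s i => [|j s IHs] i /=; rewrite ?mulr_ge0. Qed.

Lemma Phi_ge0 n i : 0 <= Phi P B N n i.
Proof. by apply: sumr_ge0 => s _; rewrite mulr_ge0 ?path_prob_ge0. Qed.

Lemma Phi_sum_ge0 n : 0 <= Phi_sum n.
Proof. by apply: sumr_ge0 => j _; apply: Phi_ge0. Qed.

Lemma Phi_le_sum n i : Phi P B N n i <= Phi_sum n.
Proof.
by rewrite /Phi_sum (bigD1 i) //= lerDl sumr_ge0 // => j _; apply: Phi_ge0.
Qed.

Lemma Phi_mulmx_le n i X : Phi_mulmx n i X <= Phi P B N n i * N X.
Proof.
rewrite /Phi_mulmx /Phi mulr_suml; apply: ler_sum => s _.
by rewrite -mulrA ler_wpM2l ?path_prob_ge0.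
Qed.

Lemma Phi_mulmx_addn_le m n i X :
  Phi_mulmx (m + n) i X <= Phi_mulmx m i X * Phi_sum n.
Proof.
elim: m i X => [|m IHm] i X.
  rewrite Phi_mulmx0 mulrC; apply: le_trans (Phi_mulmx_le _ _ _) _.
  by rewrite ler_wpM2r ?Phi_le_sum.
rewrite addSn !Phi_mulmxS mulr_suml; apply: ler_sum => j _.
by rewrite -mulrA ler_wpM2l ?IHm.
Qed.

Lemma Phi_sum_addn_le m n : Phi_sum (m + n) <= Phi_sum m * Phi_sum n.
Proof.
rewrite /Phi_sum mulr_suml; apply: ler_sum => i _.
by rewrite !Phi_mulmx1 Phi_mulmx_addn_le.
Qed.

End PathExpectation.

Lemma bernoulli_inequality {R : realFieldType} (x : R) n :
  0 <= x -> x <= 1 -> 1 - n%:R * x <= (1 - x) ^+ n.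
Proof.
move=> x_ge0 x_le1; elim: n => [|n IHn]; first by rewrite mul0r subr0 expr0.
have n_ge0 : 0 <= n%:R :> R by [].
rewrite exprSr; apply: le_trans (_ : (1 - n%:R * x) * (1 - x) <= _).
  by rewrite -natr1; nra.
by rewrite ler_wpM2r ?subr_ge0.
Qed.

Section SubmultiplicativeSequence.
Context {R : realType} {u : nat -> R}.
Hypothesis u_ge0 : forall n, 0 <= u n.
Hypothesis u_addn_le : forall m n, u (m + n) <= u m * u n.

Lemma submul_mulnD_le K q s : u (q * K + s) <= u K ^+ q * u s.
Proof.
elim: q => [|q IHq]; first by rewrite mul0n add0n expr0 mul1r.
rewrite mulSn -addnA exprS -mulrA; apply: le_trans (u_addn_le _ _) _.
by rewrite ler_wpM2l.
Qed.

(* With x := 1/(2K), Bernoulli gives (1 - x)^K >= 1/2 >= u K, so every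
   block of K steps contracts at least by the rate (1 - x)^K. *)
Lemma submul_geometric K : (0 < K)%N -> u K <= 1/2 ->
  exists C gamma, 0 < gamma < 1 /\ forall n, u n <= C * gamma ^+ n.
Proof.
move=> K_gt0 uK_le.
pose x : R := (K.*2)%:R^-1; pose gamma := 1 - x.
have x_gt0 : 0 < x by rewrite invr_gt0 ltr0n double_gt0.
have Kx : K%:R * x = 1/2.
  by rewrite /x -muln2 natrM invfM mulrA divff ?mul1r // pnatr_eq0 -lt0n.
have x_le_half : x <= 1/2.
  by rewrite -Kx -[X in X <= _]mul1r ler_wpM2r ?(ltW x_gt0) // ler1n.
have gammaK : u K <= gamma ^+ K.
  by have := bernoulli_inequality x K (ltW x_gt0) ltac:(lra); rewrite Kx; lra.
have gamma_gt0 : 0 < gamma by rewrite /gamma; lra.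
have gammaK_gt0 : 0 < gamma ^+ K by rewrite exprn_gt0.
pose D := \sum_(s < K) u s.
exists (D / gamma ^+ K), gamma; split; first by rewrite gamma_gt0 /gamma; lra.
move=> n; rewrite (divn_eq n K).
set q := (n %/ K)%N; have s_lt : (n %% K < K)%N by rewrite ltn_pmod.
set s := (n %% K)%N in s_lt *.
have us_le : u s <= D.
  by rewrite /D (bigD1 (Ordinal s_lt)) //= lerDl; apply: sumr_ge0.
apply: le_trans (submul_mulnD_le K q s) _.
have uKq_le : u K ^+ q <= gamma ^+ (q * K).
  by rewrite mulnC exprM lerXn2r // nnegrE // exprn_ge0 // ltW.
apply: le_trans (_ : gamma ^+ (q * K) * D <= _).
  by rewrite ler_pM ?exprn_ge0.
have D_ge0 : 0 <= D by apply: sumr_ge0.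
rewrite mulrC mulrAC ler_pdivlMr // -mulrA ler_wpM2l // -exprD.
apply: ler_wiXn2l; [exact: ltW | rewrite /gamma; lra | ].
by rewrite leq_add2l ltnW.
Qed.

Lemma submul_cvg0_geometric : u @ \oo --> 0 ->
  exists C gamma, 0 < gamma < 1 /\ forall n, u n <= C * gamma ^+ n.
Proof.
move=> u_cvg0; have [K0 _ uK0] := cvgr0_norm_lt _ u_cvg0 (1/2) ltac:(by []).
apply: (submul_geometric K0.+1) => //.
by have := uK0 K0.+1 (leqnSn _); rewrite /= ger0_norm // => /ltW.
Qed.

End SubmultiplicativeSequence.

Lemma cvg_sum0 {R : realType} {I : finType} {u : I -> nat -> R} :
  (forall i, u i @ \oo --> 0) -> (fun n => \sum_i u i n) @ \oo --> 0.
Proof.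
move=> u_cvg0; have := @cvg_big R _ +%R 0 xpredT add_continuous nat \oo
  (index_enum I) u (fun _ => 0) _ (fun i _ => u_cvg0 i).
by rewrite big1 //; apply.
Qed.

Theorem proposition2 (R : realType) (r p : nat) (P : 'M[R]_r)
    (B : 'I_r -> 'M[R]_p) (N : 'M[R]_p -> R) :
  stochastic P -> submult_mxnorm N ->
  ((forall i : 'I_r, (fun n => Phi P B N n i) @ \oo --> (0 : R)) <->
   (exists (C gamma : R), 0 < gamma < 1 /\
      forall (n : nat) (i : 'I_r), (1 <= n)%N -> Phi P B N n i <= C * gamma ^+ n)).
Proof.
move=> [P_ge0 _] [N_ge0 _ _ _ N_mul]; split.
  move=> Phi_cvg0.
  have [C [gamma [gamma_bnd Phi_sum_le]]] :=
    submul_cvg0_geometric (Phi_sum_ge0 P B N P_ge0 N_ge0)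
      (Phi_sum_addn_le P B N P_ge0 N_ge0 N_mul) (cvg_sum0 Phi_cvg0).
  exists C, gamma; split => // n i _.
  exact: le_trans (Phi_le_sum P B N P_ge0 N_ge0 n i) (Phi_sum_le n).
move=> [C [gamma [/andP[gamma_gt0 gamma_lt1] Phi_le]]] i.
apply: (@squeeze_cvgr _ _ _ _ (fun _ => 0) (fun n => C * gamma ^+ n)).
- by exists 1%N => // n /= n_ge1; rewrite Phi_ge0 ?Phi_le.
- exact: cvg_cst.
- rewrite -(mulr0 C); apply: cvgM; first exact: cvg_cst.
  by apply: cvg_expr; rewrite ger0_norm ?ltW.
Qed.
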